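(* Let $t_0>0$, $q>0$, let $\lambda:[t_0,+\infty[\to\,]0,+\infty[$ be continuous and let $\tau(t)=\frac{1}{q^q}\big(t_0+\int_{t_0}^t[\lambda(r)]^{1/q}dr\big)^q$ for $t\ge t_0$. Suppose there exist $C_0>0$ and real numbers $b>a\ge 0$ such that $$\int_{t_0}^t[\tau(r)]^a[\lambda(r)]^{-b}\,dr\le C_0\qquad\forall t\ge t_0 .$$ Then there exists $C_1>0$ such that $\tau(t)\ge C_1(t-t_0)^{\frac{qb+1}{b-a}}$ for all $t\ge t_0$. *)

From Stdlib Require Import Reals.
From Coquelicot Require Import Coquelicot.
Open Scope R_scope.

(* Real power x^y for x >= 0, y > 0, with the convention 0^y = 0.
   (Stdlib's Rpower 0 y = exp (y * ln 0) = 1, which is not the intended value.) *)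
Definition rpow0 (x y : R) : R :=
  if Rlt_dec 0 x then Rpower x y else 0.

Definition continuous_on_halfline (t0 : R) (f : R -> R) : Prop :=
  forall t, t0 <= t ->
    filterlim f (within (fun r => t0 <= r) (locally t)) (locally (f t)).

Definition tau (t0 q : R) (lam : R -> R) (t : R) : R :=
  / Rpower q q * Rpower (t0 + RInt (fun r => Rpower (lam r) (/ q)) t0 t) q.

From Stdlib Require Import Reals Lra.
From Coquelicot Require Import Coquelicot.
Open Scope R_scope.

(* Put T := t0 + \int_{t0}^t lambda^(1/q), so that tau = (T/q)^q and T' = lambda^(1/q).
   The weight h := T' T^(-a/b) has primitive (b/(b-a)) T^((b-a)/b), while with s := q b
   the power h^(-s) is q^(q a) tau^a lambda^(-b), whose integral is at most q^(q a) C0.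
   The reverse Hoelder inequality (t - t0)^(1+s) <= (\int h)^s \int h^(-s), a consequence
   of the pointwise Young bound (1+s) c <= s y + c^(1+s) y^(-s), therefore bounds
   T(t)^(q (b-a)) below by a multiple of (t - t0)^(1 + q b). *)

Lemma Rpower_gt_0 (x y : R) : 0 < Rpower x y.
Proof. apply exp_pos. Qed.

Lemma ln_le_sub_1 (x : R) : 0 < x -> ln x <= x - 1.
Proof.
  intros Hx. rewrite <- (ln_exp (x - 1)). apply ln_le; [exact Hx|].
  pose proof (exp_ineq1_le (x - 1)). lra.
Qed.

Lemma young_Rpower (s c y : R) : 0 < s -> 0 < c -> 0 < y ->
  (1 + s) * c <= s * y + Rpower c (1 + s) * Rpower y (- s).
Proof.
  intros Hs Hc Hy.
  assert (Hpow : Rpower c (1 + s) * Rpower y (- s) = c * exp (s * (ln c - ln y))).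
  { transitivity (exp (ln c + s * (ln c - ln y))).
    - unfold Rpower. rewrite <- exp_plus. f_equal. ring.
    - rewrite exp_plus, exp_ln by exact Hc. reflexivity. }
  assert (Hln : ln y - ln c <= y / c - 1).
  { rewrite <- ln_div by assumption. apply ln_le_sub_1, Rdiv_lt_0_compat; assumption. }
  assert (Hcy : c * (y / c) = y) by (field; lra).
  pose proof (exp_ineq1_le (s * (ln c - ln y))).
  assert (s * c * (ln y - ln c) <= s * c * (y / c - 1))
    by (apply Rmult_le_compat_l; [nra | exact Hln]).
  rewrite Hpow. nra.
Qed.

Lemma RInt_young (h : R -> R) (u v s c : R) :
  u <= v -> 0 < s -> 0 < c -> (forall x, u <= x <= v -> 0 < h x) ->
  ex_RInt h u v -> ex_RInt (fun x => Rpower (h x) (- s)) u v ->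
  (1 + s) * c * (v - u) <=
    s * RInt h u v + Rpower c (1 + s) * RInt (fun x => Rpower (h x) (- s)) u v.
Proof.
  intros Huv Hs Hc Hh Ih Ihs.
  assert (Hsum := is_RInt_plus _ _ u v _ _
    (is_RInt_scal _ u v s _ (RInt_correct _ _ _ Ih))
    (is_RInt_scal _ u v (Rpower c (1 + s)) _ (RInt_correct _ _ _ Ihs))).
  assert (Hle := is_RInt_le _ _ u v _ _ Huv (is_RInt_const u v ((1 + s) * c)) Hsum).
  change (scal (v - u) ((1 + s) * c)) with ((v - u) * ((1 + s) * c)) in Hle.
  rewrite Rmult_comm. apply Hle.
  intros x Hx. apply young_Rpower; [exact Hs | exact Hc | apply Hh; lra].
Qed.

Lemma RInt_reverse_holder (h : R -> R) (u v s A B : R) :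
  u < v -> 0 < s -> (forall x, u <= x <= v -> 0 < h x) ->
  ex_RInt h u v -> ex_RInt (fun x => Rpower (h x) (- s)) u v ->
  0 < A -> RInt h u v <= A ->
  0 < B -> RInt (fun x => Rpower (h x) (- s)) u v <= B ->
  Rpower (v - u) (1 + s) <= Rpower A s * B.
Proof.
  intros Huv Hs Hh Ih Ihs HA HhA HB HhB.
  (* the choice of [c] with [c^(1+s) = A/B] optimizes [RInt_young] *)
  set (c := Rpower (A / B) (/ (1 + s))).
  assert (Hc : 0 < c) by apply Rpower_gt_0.
  assert (Hc1s : Rpower c (1 + s) = A / B).
  { unfold c. rewrite Rpower_mult, Rinv_l, Rpower_1 by (try apply Rdiv_lt_0_compat; lra).
    reflexivity. }
  assert (HcD : c * (v - u) <= A).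
  { pose proof (RInt_young h u v s c (Rlt_le _ _ Huv) Hs Hc Hh Ih Ihs) as Hy.
    rewrite Hc1s in Hy.
    assert (A / B * RInt (fun x => Rpower (h x) (- s)) u v <= A / B * B)
      by (apply Rmult_le_compat_l; [left; apply Rdiv_lt_0_compat |]; assumption).
    replace (A / B * B) with A in * by (field; lra).
    nra. }
  assert (Hpow : Rpower (c * (v - u)) (1 + s) <= Rpower A (1 + s)).
  { apply Rle_Rpower_l; [lra | split; [nra | exact HcD]]. }
  rewrite <- Rpower_mult_distr, Hc1s in Hpow by lra.
  rewrite (Rpower_plus 1 s A), Rpower_1 in Hpow by exact HA.
  apply (Rmult_le_reg_l (A / B)); [apply Rdiv_lt_0_compat; assumption |].
  replace (A / B * (Rpower A s * B)) with (Rpower A s * A) by (field; lra).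
  lra.
Qed.

Lemma continuous_Rpower_l (e x : R) : 0 < x -> continuous (fun y => Rpower y e) x.
Proof.
  intros Hx. apply (ex_derive_continuous (K := R_AbsRing) (V := R_NormedModule)).
  exists (e * Rpower x (e - 1)).
  apply is_derive_Reals, derivable_pt_lim_power, Hx.
Qed.

Lemma continuous_on_halfline_Rmax (t0 : R) (f : R -> R) :
  continuous_on_halfline t0 f -> forall x, continuous (fun r => f (Rmax t0 r)) x.
Proof.
  intros Hf x. eapply filterlim_comp; [| apply (Hf (Rmax t0 x) (Rmax_l _ _))].
  intros P [eps HP]. exists eps. intros y Hy. apply HP; [|apply Rmax_l].
  change (Rabs (Rmax t0 y - Rmax t0 x) < eps).
  change (Rabs (y - x) < eps) in Hy.
  apply Rabs_def2 in Hy. apply Rabs_def1;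
  unfold Rmax; destruct (Rle_dec t0 y), (Rle_dec t0 x); lra.
Qed.

Lemma Rpower_le_root (x y k K m : R) : 0 < x -> 0 < k -> 0 < K ->
  Rpower y m <= Rpower x k * K -> Rpower K (- / k) * Rpower y (m / k) <= x.
Proof.
  intros Hx Hk HK H.
  assert (Hdiv : 0 < Rpower y m / K <= Rpower x k).
  { split; [apply Rdiv_lt_0_compat; [apply Rpower_gt_0 | exact HK] |].
    unfold Rdiv. apply (Rmult_le_reg_r K); [exact HK |].
    rewrite Rmult_assoc, Rinv_l, Rmult_1_r by lra. exact H. }
  apply (Rle_Rpower_l _ _ (/ k)) in Hdiv; [| left; apply Rinv_0_lt_compat, Hk].
  rewrite Rpower_mult, Rinv_r, Rpower_1 in Hdiv by lra.
  replace (Rpower K (- / k) * Rpower y (m / k)) with (Rpower (Rpower y m / K) (/ k));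
    [exact Hdiv |].
  unfold Rpower. rewrite ln_div, ln_exp by (apply exp_pos || exact HK).
  rewrite <- exp_plus. f_equal. field. lra.
Qed.

Section TauRoot.

Variables (t0 q : R) (lam : R -> R).
Hypotheses (ht0 : 0 < t0) (hq : 0 < q) (hcont : continuous_on_halfline t0 lam)
  (hpos : forall t, t0 <= t -> 0 < lam t).

(* Extending [lam] by the constant [lam t0] to the left of [t0] makes [tau_root]
   differentiable at [t0] as well. *)
Definition lam_ext (x : R) : R := lam (Rmax t0 x).

Definition tau_root (x : R) : R := t0 + RInt (fun r => Rpower (lam_ext r) (/ q)) t0 x.

Lemma lam_ext_gt_0 (x : R) : 0 < lam_ext x.
Proof. apply hpos, Rmax_l. Qed.

Lemma lam_ext_eq (x : R) : t0 <= x -> lam_ext x = lam x.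
Proof. intros Hx. unfold lam_ext. rewrite Rmax_right by exact Hx. reflexivity. Qed.

Lemma continuous_Rpower_lam_ext (e x : R) : continuous (fun r => Rpower (lam_ext r) e) x.
Proof.
  apply (continuous_comp lam_ext (fun y => Rpower y e));
    [apply continuous_on_halfline_Rmax, hcont |].
  apply continuous_Rpower_l, lam_ext_gt_0.
Qed.

Lemma is_derive_tau_root (x : R) : is_derive tau_root x (Rpower (lam_ext x) (/ q)).
Proof.
  assert (Hint : is_derive (fun y => RInt (fun r => Rpower (lam_ext r) (/ q)) t0 y) x
                  (Rpower (lam_ext x) (/ q))).
  { apply (is_derive_RInt (V := R_NormedModule) (fun r => Rpower (lam_ext r) (/ q)) _ t0 x);
      [| apply continuous_Rpower_lam_ext].
    apply filter_forall. intros y. apply (RInt_correct (V := R_CompleteNormedModule)).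
    apply (ex_RInt_continuous (V := R_CompleteNormedModule)). intros z _.
    apply continuous_Rpower_lam_ext. }
  pose proof (is_derive_plus _ _ x _ _ (is_derive_const t0 x) Hint) as H.
  rewrite plus_zero_l in H. exact H.
Qed.

Lemma continuous_tau_root (x : R) : continuous tau_root x.
Proof.
  apply (ex_derive_continuous (K := R_AbsRing) (V := R_NormedModule)).
  eexists. apply is_derive_tau_root.
Qed.

Lemma tau_root_t0 : tau_root t0 = t0.
Proof. unfold tau_root. rewrite RInt_point. change (t0 + 0 = t0). ring. Qed.

Lemma tau_root_ge (x : R) : t0 <= x -> t0 <= tau_root x.
Proof.
  intros Hx. unfold tau_root.
  enough (0 <= RInt (fun r => Rpower (lam_ext r) (/ q)) t0 x) by lra.
  apply RInt_ge_0; [exact Hx | | intros; left; apply Rpower_gt_0].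
  apply (ex_RInt_continuous (V := R_CompleteNormedModule)). intros z _.
  apply continuous_Rpower_lam_ext.
Qed.

Lemma tau_eq (x : R) : t0 <= x -> tau t0 q lam x = / Rpower q q * Rpower (tau_root x) q.
Proof.
  intros Hx. unfold tau, tau_root. do 3 f_equal.
  apply RInt_ext. intros y Hy. rewrite Rmin_left, Rmax_right in Hy by exact Hx.
  rewrite lam_ext_eq; [reflexivity | lra].
Qed.

Lemma tau_root_gt_0 (x : R) : t0 <= x -> 0 < tau_root x.
Proof. intros Hx. pose proof (tau_root_ge x Hx). lra. Qed.

Definition tau_weight (p x : R) : R := Rpower (lam_ext x) (/ q) * Rpower (tau_root x) (- p).

Lemma tau_weight_gt_0 (p x : R) : 0 < tau_weight p x.
Proof. apply Rmult_lt_0_compat; apply Rpower_gt_0. Qed.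

Lemma continuous_tau_weight (p x : R) : t0 <= x -> continuous (tau_weight p) x.
Proof.
  intros Hx.
  apply (continuous_mult (U := R_UniformSpace) (K := R_AbsRing));
    [apply continuous_Rpower_lam_ext |].
  apply (continuous_comp tau_root (fun y => Rpower y (- p)));
    [apply continuous_tau_root | apply continuous_Rpower_l, tau_root_gt_0, Hx].
Qed.

Lemma is_RInt_tau_weight (p t : R) : p <> 1 -> t0 <= t ->
  is_RInt (tau_weight p) t0 t ((Rpower (tau_root t) (1 - p) - Rpower t0 (1 - p)) / (1 - p)).
Proof.
  intros Hp Ht.
  set (G := fun x => / (1 - p) * Rpower (tau_root x) (1 - p)).
  replace ((Rpower (tau_root t) (1 - p) - Rpower t0 (1 - p)) / (1 - p))
    with (minus (G t) (G t0))
    by (unfold G, minus, plus, opp; simpl; rewrite tau_root_t0; field; lra).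
  apply (is_RInt_derive (V := R_CompleteNormedModule));
    intros x Hx; rewrite Rmin_left, Rmax_right in Hx by exact Ht.
  - assert (Hpow : is_derive (fun y => Rpower y (1 - p)) (tau_root x)
                     ((1 - p) * Rpower (tau_root x) (- p))).
    { apply is_derive_Reals. replace (- p) with (1 - p - 1) by ring.
      apply derivable_pt_lim_power, tau_root_gt_0. lra. }
    pose proof (is_derive_scal _ x (/ (1 - p)) _
      (is_derive_comp _ _ x _ _ Hpow (is_derive_tau_root x))) as H.
    replace (tau_weight p x)
      with (/ (1 - p) * scal (Rpower (lam_ext x) (/ q)) ((1 - p) * Rpower (tau_root x) (- p)))
      by (unfold tau_weight, scal; simpl; unfold mult; simpl; field; lra).
    exact H.
  - apply continuous_tau_weight. lra.
Qed.

Lemma ex_RInt_Rpower_tau_weight (p e t : R) : t0 <= t ->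
  ex_RInt (fun x => Rpower (tau_weight p x) e) t0 t.
Proof.
  intros Ht. apply (ex_RInt_continuous (V := R_CompleteNormedModule)).
  intros x Hx. rewrite Rmin_left, Rmax_right in Hx by exact Ht.
  apply (continuous_comp (tau_weight p) (fun y => Rpower y e));
    [apply continuous_tau_weight; lra | apply continuous_Rpower_l, tau_weight_gt_0].
Qed.

Variables (C0 a b : R).
Hypotheses (ha : 0 <= a) (hab : a < b)
  (hint : forall t, t0 <= t ->
     RInt (fun r => Rpower (tau t0 q lam r) a * Rpower (lam r) (- b)) t0 t <= C0).

Lemma Rpower_tau_weight (x : R) : t0 <= x ->
  Rpower (tau_weight (a / b) x) (- (q * b)) =
  Rpower q (q * a) * (Rpower (tau t0 q lam x) a * Rpower (lam x) (- b)).
Proof.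
  intros Hx. unfold tau_weight. rewrite tau_eq, <- lam_ext_eq by exact Hx.
  pose proof (lam_ext_gt_0 x). pose proof (tau_root_gt_0 x Hx).
  unfold Rpower.
  rewrite !ln_mult, ln_Rinv, !ln_exp by (try apply Rinv_0_lt_compat; apply exp_pos || lra).
  rewrite <- !exp_plus. f_equal. field. lra.
Qed.

Lemma RInt_Rpower_tau_weight_le (t : R) : t0 <= t ->
  RInt (fun x => Rpower (tau_weight (a / b) x) (- (q * b))) t0 t <= Rpower q (q * a) * C0.
Proof.
  intros Ht.
  pose proof (Rpower_gt_0 q (q * a)) as Hqa.
  replace (RInt (fun x => Rpower (tau_weight (a / b) x) (- (q * b))) t0 t)
    with (Rpower q (q * a) *
          RInt (fun r => Rpower (tau t0 q lam r) a * Rpower (lam r) (- b)) t0 t).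
  - apply Rmult_le_compat_l; [lra | exact (hint t Ht)].
  - apply (Rmult_eq_reg_l (/ Rpower q (q * a))); [| apply Rinv_neq_0_compat; lra].
    rewrite <- Rmult_assoc, Rinv_l, Rmult_1_l by lra.
    rewrite <- (RInt_scal (V := R_CompleteNormedModule))
      by apply ex_RInt_Rpower_tau_weight, Ht.
    apply RInt_ext. intros x Hx. rewrite Rmin_left, Rmax_right in Hx by exact Ht.
    rewrite Rpower_tau_weight by lra.
    unfold scal; simpl; unfold mult; simpl. field. lra.
Qed.

Lemma tau_root_holder (t : R) : t0 < t -> 0 < C0 ->
  Rpower (t - t0) (1 + q * b) <=
  Rpower (Rpower (tau_root t) q) (b - a) *
    (Rpower (1 - a / b) (- (q * b)) * (Rpower q (q * a) * C0)).
Proof.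
  intros Ht HC0.
  assert (Hp : 0 < 1 - a / b).
  { replace (1 - a / b) with ((b - a) / b) by (field; lra). apply Rdiv_lt_0_compat; lra. }
  pose proof (is_RInt_tau_weight (a / b) t ltac:(lra) ltac:(lra)) as Hh.
  set (A := Rpower (tau_root t) (1 - a / b) / (1 - a / b)).
  assert (HA : Rpower A (q * b) =
               Rpower (Rpower (tau_root t) q) (b - a) * Rpower (1 - a / b) (- (q * b))).
  { unfold A, Rpower. rewrite ln_div, !ln_exp by (apply exp_pos || exact Hp).
    rewrite <- exp_plus. f_equal. field. lra. }
  rewrite <- Rmult_assoc, <- HA.
  apply (RInt_reverse_holder (tau_weight (a / b))).
  - exact Ht.
  - nra.
  - intros. apply tau_weight_gt_0.
  - eexists. exact Hh.
  - apply ex_RInt_Rpower_tau_weight. lra.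
  - apply Rdiv_lt_0_compat; [apply Rpower_gt_0 | exact Hp].
  - rewrite (is_RInt_unique _ _ _ _ Hh). unfold A.
    pose proof (Rpower_gt_0 t0 (1 - a / b)).
    apply Rmult_le_compat_r; [left; apply Rinv_0_lt_compat, Hp | lra].
  - apply Rmult_lt_0_compat; [apply Rpower_gt_0 | exact HC0].
  - apply RInt_Rpower_tau_weight_le. lra.
Qed.

End TauRoot.

Theorem mainTheorem2 (t0 q : R) (lam : R -> R) (C0 a b : R)
  (ht0 : 0 < t0) (hq : 0 < q)
  (hcont : continuous_on_halfline t0 lam)
  (hpos : forall t, t0 <= t -> 0 < lam t)
  (hC0 : 0 < C0) (ha : 0 <= a) (hab : a < b)
  (hint : forall t, t0 <= t ->
     RInt (fun r => Rpower (tau t0 q lam r) a * Rpower (lam r) (- b)) t0 t <= C0) :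
  exists C1 : R, 0 < C1 /\
    forall t, t0 <= t ->
      tau t0 q lam t >= C1 * rpow0 (t - t0) ((q * b + 1) / (b - a)).
Proof.
  set (K := Rpower (1 - a / b) (- (q * b)) * (Rpower q (q * a) * C0)).
  assert (HK : 0 < K)
    by (apply Rmult_lt_0_compat; [| apply Rmult_lt_0_compat]; try apply Rpower_gt_0; exact hC0).
  exists (/ Rpower q q * Rpower K (- / (b - a))).
  split; [apply Rmult_lt_0_compat; [apply Rinv_0_lt_compat |]; apply Rpower_gt_0 |].
  intros t Ht. apply Rle_ge.
  rewrite (tau_eq t0 q lam t Ht), Rmult_assoc.
  apply Rmult_le_compat_l; [left; apply Rinv_0_lt_compat, Rpower_gt_0 |].
  unfold rpow0. destruct (Rlt_dec 0 (t - t0)) as [Hlt | Hle].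
  - rewrite Rplus_comm.
    apply Rpower_le_root; [apply Rpower_gt_0 | lra | exact HK |].
    apply (tau_root_holder t0 q lam ht0 hq hcont hpos C0 a b ha hab hint); lra.
  - rewrite Rmult_0_r. left. apply Rpower_gt_0.
Qed.
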